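(* Let $\nu<0$ and define $\mathcal{R}_\nu:\mathbb{R}\to\mathbb{R}$ by $$\mathcal{R}_\nu(x):=\frac{(H_{\nu-1}(x))^2}{H_{\nu}(x)\,H_{\nu-2}(x)},\qquad x\in\mathbb{R},$$ where $H_\alpha$ denotes the Hermite function of index $\alpha$. Then $\mathcal{R}_\nu$ is strictly decreasing on $\mathbb{R}$.
   Context: For $\alpha<0$, the Hermite function $H_\alpha:\mathbb{R}\to\mathbb{R}$ is the solution of the ODE $u''(x)-2xu'(x)+2\alpha u(x)=0$ given by the integral representation $$H_\alpha(x)=\frac{1}{\Gamma(-\alpha)}\int_0^\infty t^{-\alpha-1}e^{-t^2-2xt}\,dt,\qquad x\in\mathbb{R},$$ where $\Gamma$ is Euler's Gamma function. In particular $H_\alpha(x)>0$ for all $x$ when $\alpha<0$, so $\mathcal{R}_\nu$ is well defined. *)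

From Stdlib Require Import Reals.
From Coquelicot Require Import Coquelicot.
Open Scope R_scope.

Definition Gamma_fn (s : R) : R :=
  RInt_gen (fun t => Rpower t (s - 1) * exp (- t))
           (at_right 0) (Rbar_locally p_infty).

(* Hermite function of index alpha < 0:
   H_alpha(x) = 1/Gamma(-alpha) * int_0^oo t^(-alpha-1) e^(-t^2 - 2 x t) dt. *)
Definition Hermite (alpha x : R) : R :=
  / Gamma_fn (- alpha) *
  RInt_gen (fun t => Rpower t (- alpha - 1) * exp (- t ^ 2 - 2 * x * t))
           (at_right 0) (Rbar_locally p_infty).

Definition Rnu (nu x : R) : R :=
  (Hermite (nu - 1) x) ^ 2 / (Hermite nu x * Hermite (nu - 2) x).

From Stdlib Require Import Reals Lra Psatz.
From Coquelicot Require Import Coquelicot.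
Open Scope R_scope.

(* Put c = -nu - 1 > -1 and M_a(x) = int_0^oo t^a e^(-t^2 - 2xt) dt.  Then H_(nu-k) is a
   positive multiple of M_(c+k), so R_nu is a positive constant times
   M_(c+1)^2 / (M_c M_(c+2)).  Differentiating under the integral sign gives M_a' = -2 M_(a+1),
   hence the derivative of this ratio has the sign of
   -(2 M_c M_(c+2)^2 - M_(c+1)^2 M_(c+2) - M_c M_(c+1) M_(c+3)).
   Integration by parts gives (a + 1) M_a = 2 M_(a+2) + 2x M_(a+1).  The quadratic form
   int_0^oo t^c e^(-t^2 - 2xt) (c0 + c1 t + c2 t^2)^2 dt is positive definite; eliminating
   M_(c+3) and M_(c+4) with the recurrence, it factors at a suitable (c0, c1, c2) as
   2 (M_c M_(c+2) - M_(c+1)^2) times the bracket above, and the first factor is positive by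
   the same form at (M_(c+1), -M_c, 0). *)

Lemma exp_le_compat x y : x <= y -> exp x <= exp y.
Proof. intros [Hlt | ->]; [left; now apply exp_increasing | apply Rle_refl]. Qed.

Lemma Rpower_le_exp q t : 0 < q -> 0 < t -> Rpower t q <= exp (q * ln q - q) * exp t.
Proof.
  intros Hq Ht. unfold Rpower. rewrite <- exp_plus. apply exp_le_compat.
  assert (Htq : 0 < t / q) by (apply Rdiv_lt_0_compat; lra).
  assert (Hln : ln (t / q) <= t / q - 1).
  { pose proof (exp_ineq1_le (ln (t / q))) as H. rewrite exp_ln in H by exact Htq. lra. }
  rewrite ln_div in Hln by lra.
  apply (Rmult_le_compat_l q) in Hln; [|lra].
  replace (q * (t / q - 1)) with (t - q) in Hln by (field; lra). lra.
Qed.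

Lemma exp_remainder_bounds u : 0 <= exp u - 1 - u <= u ^ 2 * Rmax 1 (exp u).
Proof.
  pose proof (exp_ineq1_le u). pose proof (exp_ineq1_le (- u)).
  assert (Hinv : exp u * exp (- u) = 1) by (rewrite <- exp_plus, Rplus_opp_r; apply exp_0).
  pose proof (exp_pos u). pose proof (exp_pos (- u)).
  split; [lra|].
  destruct (Rle_lt_dec 0 u).
  - rewrite Rmax_right by lra. nra.
  - pose proof (Rmax_l 1 (exp u)). nra.
Qed.

Lemma Rpower_plus_1 c t : 0 < t -> Rpower t (c + 1) = Rpower t c * t.
Proof. intros Ht. rewrite Rpower_plus, Rpower_1 by exact Ht. reflexivity. Qed.

Lemma Rpower_plus_2 c t : 0 < t -> Rpower t (c + 2) = Rpower t c * t ^ 2.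
Proof.
  intros Ht. rewrite Rpower_plus. replace 2 with (INR 2) by (simpl; ring).
  rewrite Rpower_pow by exact Ht. reflexivity.
Qed.

Lemma ball_R_iff (x e y : R) : ball x e y <-> Rabs (y - x) < e.
Proof. reflexivity. Qed.

Local Notation at_0 := (at_right 0).
Local Notation at_oo := (Rbar_locally p_infty).

Lemma filterlim_const_mult {T} {F : (T -> Prop) -> Prop} {FF : Filter F} (f : T -> R) k l :
  filterlim f F (locally l) -> filterlim (fun t => k * f t) F (locally (k * l)).
Proof.
  intros H. exact (filterlim_comp _ _ _ f (Rmult k) F (locally l) _ H (filterlim_Rbar_mult_l k l)).
Qed.

Lemma Rpower_at_0 p : 0 < p -> filterlim (fun t => Rpower t p) at_0 (locally 0).
Proof.
  intros Hp. apply filterlim_locally. intros eps.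
  exists (mkposreal _ (exp_pos (ln eps / p))). intros t Ht Ht0. simpl in Ht.
  rewrite ball_R_iff, Rminus_0_r, Rabs_right in Ht by lra.
  rewrite ball_R_iff, Rminus_0_r, Rabs_right by (apply Rle_ge, Rlt_le, exp_pos).
  apply ln_increasing in Ht; [|exact Ht0]. rewrite ln_exp in Ht.
  apply (Rmult_lt_compat_l p) in Ht; [|exact Hp].
  replace (p * (ln eps / p)) with (ln eps) in Ht by (field; lra).
  rewrite <- (exp_ln eps) by apply cond_pos. apply exp_increasing. lra.
Qed.

Lemma Rpower_at_oo p : 0 < p -> filterlim (fun t => Rpower t p) at_oo at_oo.
Proof.
  intros Hp P [M HM]. exists (exp (Rabs M / p)). intros t Ht. apply HM.
  apply ln_increasing in Ht; [|exact (exp_pos _)]. rewrite ln_exp in Ht.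
  apply (Rmult_lt_compat_l p) in Ht; [|exact Hp].
  replace (p * (Rabs M / p)) with (Rabs M) in Ht by (field; lra).
  pose proof (exp_ineq1_le (p * ln t)). pose proof (Rle_abs M). unfold Rpower. lra.
Qed.

Lemma inv_1_plus_Rpower_at_0 p : 0 < p ->
  filterlim (fun t => / (1 + Rpower t p)) at_0 (locally 1).
Proof.
  intros Hp.
  assert (Hc : continuous (fun y => / (1 + y)) 0)
    by (apply (ex_derive_continuous (fun y => / (1 + y))); auto_derive; lra).
  unfold continuous in Hc. cbv beta in Hc. rewrite Rplus_0_r, Rinv_1 in Hc.
  exact (filterlim_comp _ _ _ _ _ _ _ _ (Rpower_at_0 p Hp) Hc).
Qed.

Lemma inv_1_plus_Rpower_at_oo p : 0 < p ->
  filterlim (fun t => / (1 + Rpower t p)) at_oo (locally 0).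
Proof.
  intros Hp. apply filterlim_locally. intros eps.
  apply (filter_imp (fun t => / eps < Rpower t p)).
  - intros t Ht. rewrite ball_R_iff. pose proof (cond_pos eps).
    assert (Hinv : 0 < / eps) by (apply Rinv_0_lt_compat; lra).
    rewrite Rminus_0_r, Rabs_right by (apply Rle_ge, Rlt_le, Rinv_0_lt_compat; lra).
    rewrite <- (Rinv_inv eps). apply Rinv_lt_contravar; nra.
  - apply (Rpower_at_oo p Hp). exists (/ eps). auto.
Qed.

Lemma exp_opp_at_oo : filterlim (fun t => exp (- t)) at_oo (locally 0).
Proof. exact (filterlim_comp _ _ _ Ropp exp _ _ _ (filterlim_Rbar_opp p_infty) is_lim_exp_m). Qed.

Lemma at_0_pos : at_0 (fun t => 0 < t).
Proof. exists (mkposreal 1 Rlt_0_1). auto. Qed.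

Lemma at_oo_pos : at_oo (fun t => 0 < t).
Proof. exists 0. auto. Qed.

Lemma filter_prod_0_oo (P : R * R -> Prop) d M : 0 < d ->
  (forall a b, 0 < a < d -> M < b -> P (a, b)) -> filter_prod at_0 at_oo P.
Proof.
  intros Hd HP. apply (Filter_prod _ _ _ (fun a => 0 < a < d) (fun b => M < b)).
  - exists (mkposreal d Hd). intros a Ha Ha0. simpl in Ha.
    rewrite ball_R_iff, Rminus_0_r, Rabs_right in Ha by lra. lra.
  - exists M. auto.
  - auto.
Qed.

Lemma ex_RInt_continuous_pos (f : R -> R) u v :
  (forall t, 0 < t -> continuous f t) -> 0 < u -> 0 < v -> ex_RInt f u v.
Proof.
  intros Hf Hu Hv. apply (ex_RInt_continuous (V := R_CompleteNormedModule)).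
  intros t [Ht _]. apply Hf. eapply Rlt_le_trans; [|exact Ht]. now apply Rmin_glb_lt.
Qed.

Section Domination.

Variables f g G : R -> R.
Hypothesis f_cont : forall t, 0 < t -> continuous f t.
Hypothesis g_cont : forall t, 0 < t -> continuous g t.
Hypothesis G_derive : forall t, 0 < t -> is_derive G t (g t).
Hypothesis f_le_g : forall t, 0 < t -> Rabs (f t) <= g t.

Lemma RInt_le_antiderivative u v : 0 < u -> u <= v -> Rabs (RInt f u v) <= G v - G u.
Proof.
  intros Hu Huv.
  assert (Hpos : forall t, Rmin u v <= t <= Rmax u v -> 0 < t).
  { intros t [Ht _]. eapply Rlt_le_trans; [|exact Ht]. apply Rmin_glb_lt; lra. }
  assert (HgG : RInt g u v = G v - G u).
  { apply is_RInt_unique, (is_RInt_derive G g); intros t Ht;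
      [apply G_derive | apply g_cont]; auto. }
  rewrite <- HgG.
  eapply Rle_trans; [apply abs_RInt_le; [lra | apply ex_RInt_continuous_pos; auto; lra]|].
  apply RInt_le; [lra | | apply ex_RInt_continuous_pos; auto; lra | intros t Ht; apply f_le_g; lra].
  apply (ex_RInt_continuous_pos (fun t => Rabs (f t))); [|lra|lra].
  intros t Ht. apply (continuous_comp f Rabs); [auto | apply continuous_Rabs].
Qed.

Lemma Rabs_RInt_le_antiderivative u v : 0 < u -> 0 < v -> Rabs (RInt f u v) <= Rabs (G v - G u).
Proof.
  intros Hu Hv. destruct (Rle_lt_dec u v).
  - eapply Rle_trans; [apply RInt_le_antiderivative; auto | apply Rle_abs].
  - rewrite <- opp_RInt_swap by (apply ex_RInt_continuous_pos; auto).
    change (opp (RInt f v u)) with (- RInt f v u). rewrite Rabs_Ropp.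
    replace (G v - G u) with (- (G u - G v)) by ring. rewrite Rabs_Ropp.
    eapply Rle_trans; [apply RInt_le_antiderivative; auto; lra | apply Rle_abs].
Qed.

Lemma ex_RInt_gen_0_oo_dominated la lb :
  filterlim G at_0 (locally la) -> filterlim G at_oo (locally lb) ->
  ex_RInt_gen f at_0 at_oo.
Proof.
  intros HGa HGb.
  assert (Hcauchy : exists l, filterlim (fun ab => RInt f (fst ab) (snd ab))
                                        (filter_prod at_0 at_oo) (locally l)).
  { apply filterlim_locally_cauchy. intros eps.
    set (e := pos_div_2 (pos_div_2 eps)).
    exists (fun ab => (0 < fst ab /\ ball la e (G (fst ab)))
                   /\ (0 < snd ab /\ ball lb e (G (snd ab)))).
    split.
    - apply (Filter_prod _ _ _ (fun a => 0 < a /\ ball la e (G a))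
                               (fun b => 0 < b /\ ball lb e (G b))).
      + apply filter_and; [apply at_0_pos | apply HGa, locally_ball].
      + apply filter_and; [apply at_oo_pos | apply HGb, locally_ball].
      + auto.
    - intros [a b] [a' b'] [[Ha Hla] [Hb Hlb]] [[Ha' Hla'] [Hb' Hlb']]. simpl in *.
      rewrite ball_R_iff in *.
      rewrite <- (RInt_Chasles f a a' b), <- (RInt_Chasles f a' b' b)
        by (apply ex_RInt_continuous_pos; auto).
      pose proof (Rabs_RInt_le_antiderivative a a' Ha Ha') as Ia.
      pose proof (Rabs_RInt_le_antiderivative b' b Hb' Hb) as Ib.
      apply Rabs_lt_between in Hla, Hla', Hlb, Hlb'.
      unfold e in *; simpl in *.
      assert (Rabs (G a' - G a) < eps / 2) by (apply Rabs_lt_between; lra).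
      assert (Rabs (G b - G b') < eps / 2) by (apply Rabs_lt_between; lra).
      apply Rabs_le_between in Ia, Ib. apply Rabs_lt_between.
      unfold plus; simpl. lra. }
  destruct Hcauchy as [l Hl]. exists l.
  apply (filterlimi_lim_ext_loc (fun ab => RInt f (fst ab) (snd ab))); [|exact Hl].
  apply (filter_prod_0_oo _ 1 0); [lra|]. intros a b Ha Hb. simpl.
  apply (RInt_correct (V := R_CompleteNormedModule)), ex_RInt_continuous_pos; auto; lra.
Qed.

End Domination.

Lemma is_RInt_gen_0_oo_derive (f F : R -> R) la lb :
  (forall t, 0 < t -> is_derive F t (f t)) -> (forall t, 0 < t -> continuous f t) ->
  filterlim F at_0 (locally la) -> filterlim F at_oo (locally lb) ->
  is_RInt_gen f at_0 at_oo (lb - la).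
Proof.
  intros HF Hf Ha Hb.
  apply (filterlimi_lim_ext_loc (fun ab => F (snd ab) - F (fst ab))).
  - apply (filter_prod_0_oo _ 1 0); [lra|]. intros a b Ha0 Hb0. simpl.
    apply (is_RInt_derive F f); intros t [Ht _];
      [apply HF | apply Hf]; (eapply Rlt_le_trans; [|exact Ht]; apply Rmin_glb_lt; lra).
  - apply (filterlim_comp_2 (G := locally lb) (H := locally la)
      (fun ab => F (snd ab)) (fun ab => F (fst ab)) (fun u v => plus u (opp v))).
    + exact (filterlim_comp _ _ _ snd F _ _ _ filterlim_snd Hb).
    + exact (filterlim_comp _ _ _ fst F _ _ _ filterlim_fst Ha).
    + apply (filterlim_comp_2 (G := locally lb) (H := locally (opp la))
        fst (fun z => opp (snd z)) plus).
      * exact filterlim_fst.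
      * exact (filterlim_comp _ _ _ snd opp _ _ _ filterlim_snd (filterlim_opp la)).
      * exact (filterlim_plus lb (opp la)).
Qed.

Lemma is_RInt_gen_0_oo_ge0 (f : R -> R) l :
  is_RInt_gen f at_0 at_oo l -> (forall t, 0 < t -> 0 <= f t) -> 0 <= l.
Proof.
  intros Hl Hf.
  assert (Hnorm : norm l <= l).
  { apply (RInt_gen_norm (Fa := at_0) (Fb := at_oo) f f l l); auto.
    - apply (filter_prod_0_oo _ 1 1); [lra|]. intros; simpl; lra.
    - apply (filter_prod_0_oo _ 1 1); [lra|]. intros a b Ha Hb t Ht. simpl in Ht.
      apply Req_le, Rabs_right, Rle_ge, Hf. lra. }
  pose proof (Rabs_pos l).
  unfold norm in Hnorm; simpl in Hnorm. unfold abs in Hnorm; simpl in Hnorm. lra.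
Qed.

Lemma is_RInt_gen_0_oo_le (f g : R -> R) lf lg :
  is_RInt_gen f at_0 at_oo lf -> is_RInt_gen g at_0 at_oo lg ->
  (forall t, 0 < t -> f t <= g t) -> lf <= lg.
Proof.
  intros Hf Hg Hfg.
  cut (0 <= lg - lf); [lra|].
  apply (is_RInt_gen_0_oo_ge0 (fun t => g t - f t)); [exact (is_RInt_gen_minus g f lg lf Hg Hf)|].
  intros t Ht. specialize (Hfg t Ht). lra.
Qed.

Lemma RInt_gt_0_near (f : R -> R) t0 :
  (forall t, 0 < t -> continuous f t) -> 0 < t0 -> 0 < f t0 ->
  exists u v, 0 < u < v /\ 0 < RInt f u v.
Proof.
  intros Hf Ht0 Hft0.
  assert (He : 0 < f t0 / 2) by lra.
  destruct (proj1 (filterlim_locally _ _) (Hf t0 Ht0) (mkposreal _ He)) as [d Hd].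
  set (r := Rmin d t0 / 2).
  assert (Hr : 0 < r /\ r < t0 /\ r < d).
  { pose proof (Rmin_l d t0). pose proof (Rmin_r d t0). pose proof (cond_pos d).
    pose proof (Rmin_glb_lt d t0 0 (cond_pos d) Ht0). unfold r. lra. }
  exists (t0 - r), (t0 + r). split; [lra|].
  apply RInt_gt_0; [lra| |intros t Ht; apply Hf; lra].
  intros t Ht. assert (Hball : ball t0 d t) by (rewrite ball_R_iff; apply Rabs_lt_between; lra).
  specialize (Hd t Hball). rewrite ball_R_iff in Hd. simpl in Hd. apply Rabs_lt_between in Hd. lra.
Qed.

Lemma is_RInt_gen_0_oo_gt0 (f : R -> R) l t0 :
  is_RInt_gen f at_0 at_oo l -> (forall t, 0 < t -> continuous f t) ->
  (forall t, 0 < t -> 0 <= f t) -> 0 < t0 -> 0 < f t0 -> 0 < l.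
Proof.
  intros Hl Hf Hf0 Ht0 Hft0.
  destruct (RInt_gt_0_near f t0 Hf Ht0 Hft0) as (u & v & Huv & Hint).
  assert (Hhalf : 0 < RInt f u v / 2) by lra.
  pose proof (proj1 (filterlimi_locally _ l) Hl (mkposreal _ Hhalf)) as Hev.
  assert (Hout : filter_prod at_0 at_oo (fun ab => 0 < fst ab < u /\ v < snd ab))
    by (apply (filter_prod_0_oo _ u v); [lra | auto]).
  destruct (filter_ex _ (filter_and _ _ Hev Hout)) as [[a b] [[I [HI Hball]] [Ha Hb]]]. simpl in *.
  apply (is_RInt_unique (V := R_CompleteNormedModule)) in HI. subst I.
  rewrite ball_R_iff in Hball. apply Rabs_lt_between in Hball.
  assert (Hsplit : RInt f a b = RInt f a u + RInt f u v + RInt f v b).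
  { rewrite <- (RInt_Chasles f a u b), <- (RInt_Chasles f u v b)
      by (apply ex_RInt_continuous_pos; auto; lra).
    unfold plus; simpl. ring. }
  assert (0 <= RInt f a u /\ 0 <= RInt f v b).
  { split; apply RInt_ge_0; try lra; try (apply ex_RInt_continuous_pos; auto; lra).
    all: intros; apply Hf0; lra. }
  simpl in Hball. lra.
Qed.

Lemma continuous_Rpower_pos c t : 0 < t -> continuous (fun s => Rpower s c) t.
Proof.
  intros Ht. apply (ex_derive_continuous (fun s => Rpower s c)).
  unfold Rpower. auto_derive. exact Ht.
Qed.

Lemma ex_RInt_gen_Rpower_mul c (h : R -> R) K : -1 < c ->
  (forall t, 0 < t -> continuous h t) ->
  (forall t, 0 < t -> Rabs (h t) * (1 + Rpower t (c + 1)) ^ 2 <= K) ->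
  ex_RInt_gen (fun t => Rpower t c * h t) at_0 at_oo.
Proof.
  intros Hc Hh HK. set (p := c + 1) in HK. assert (Hp : 0 < p) by (unfold p; lra).
  assert (Hden : forall t, 0 < (1 + Rpower t p) ^ 2)
    by (intros t; pose proof (exp_pos (p * ln t)); unfold Rpower; nra).
  apply (ex_RInt_gen_0_oo_dominated _ (fun t => Rpower t c * K / (1 + Rpower t p) ^ 2)
          (fun t => - (K / p) * / (1 + Rpower t p)))
    with (la := - (K / p) * 1) (lb := - (K / p) * 0).
  - intros t Ht. apply (continuous_mult (fun s => Rpower s c) h); auto using continuous_Rpower_pos.
  - intros t Ht. pose proof (Hden t).
    apply (ex_derive_continuous (fun t => Rpower t c * K / (1 + Rpower t p) ^ 2)).
    unfold Rpower in *. auto_derive. split; [exact Ht|]. split; [exact Ht|]. split; [|exact I]. nra.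
  - intros t Ht. pose proof (Hden t). unfold Rpower in *. auto_derive.
    + split; [exact Ht|]. split; [|exact I]. nra.
    + replace (p * ln t) with (c * ln t + ln t) by (unfold p; ring).
      rewrite exp_plus, exp_ln by exact Ht. field.
      pose proof (exp_pos (c * ln t)). split; [nra | split; lra].
  - intros t Ht. specialize (HK t Ht). pose proof (Hden t).
    assert (Hct : 0 < Rpower t c) by apply exp_pos.
    rewrite Rabs_mult, (Rabs_right (Rpower t c)) by lra.
    unfold Rdiv. rewrite Rmult_assoc. apply Rmult_le_compat_l; [lra|].
    apply (Rmult_le_reg_r ((1 + Rpower t p) ^ 2)); [lra|]. rewrite Rmult_assoc, Rinv_l by lra. lra.
  - apply filterlim_const_mult, inv_1_plus_Rpower_at_0, Hp.
  - apply filterlim_const_mult, inv_1_plus_Rpower_at_oo, Hp.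
Qed.

Lemma one_plus_Rpower_sq_le p : 0 < p ->
  exists C, 0 < C /\ forall t, 0 < t -> (1 + Rpower t p) ^ 2 <= 2 + 2 * C * exp t.
Proof.
  intros Hp. exists (exp (2 * p * ln (2 * p) - 2 * p)). split; [apply exp_pos|].
  intros t Ht. pose proof (Rpower_le_exp (2 * p) t ltac:(lra) Ht) as H.
  replace (Rpower t (2 * p)) with (Rpower t p ^ 2) in H
    by (unfold Rpower; simpl; rewrite Rmult_1_r, <- exp_plus; f_equal; ring).
  pose proof (pow2_ge_0 (Rpower t p - 1)). nra.
Qed.

Lemma Gamma_fn_pos s : 0 < s -> 0 < Gamma_fn s.
Proof.
  intros Hs.
  assert (Hexp : forall t, continuous (fun t => exp (- t)) t)
    by (intros t; apply (ex_derive_continuous (fun t => exp (- t))); auto_derive; exact I).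
  destruct (one_plus_Rpower_sq_le (s - 1 + 1)) as (C & HC & HCb); [lra|].
  assert (Hex : ex_RInt_gen (fun t => Rpower t (s - 1) * exp (- t)) at_0 at_oo).
  { apply (ex_RInt_gen_Rpower_mul (s - 1) (fun t => exp (- t)) (2 + 2 * C)); [lra | auto |].
    intros t Ht. specialize (HCb t Ht).
    assert (Hinv : exp (- t) * exp t = 1) by (rewrite <- exp_plus, Rplus_opp_l; apply exp_0).
    assert (Hle1 : exp (- t) <= 1) by (rewrite <- exp_0; apply exp_le_compat; lra).
    pose proof (exp_pos (- t)). rewrite Rabs_right by lra.
    apply Rle_trans with (exp (- t) * (2 + 2 * C * exp t)); [apply Rmult_le_compat_l; lra | nra]. }
  apply (is_RInt_gen_0_oo_gt0 _ _ 1 (RInt_gen_correct (V := R_CompleteNormedModule) _ Hex)).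
  - intros t Ht. apply (continuous_mult (fun t => Rpower t (s - 1)) (fun t => exp (- t)));
      [apply continuous_Rpower_pos, Ht | apply Hexp].
  - intros t _. apply Rlt_le, Rmult_lt_0_compat; apply exp_pos.
  - exact Rlt_0_1.
  - apply Rmult_lt_0_compat; apply exp_pos.
Qed.

Definition weight (x t : R) : R := exp (- t ^ 2 - 2 * x * t).

Definition moment (c x : R) : R := RInt_gen (fun t => Rpower t c * weight x t) at_0 at_oo.

Lemma Hermite_moment alpha x : Hermite alpha x = / Gamma_fn (- alpha) * moment (- alpha - 1) x.
Proof. reflexivity. Qed.

Lemma continuous_weight x t : continuous (weight x) t.
Proof. apply (ex_derive_continuous (weight x)). unfold weight. auto_derive. exact I. Qed.

Lemma Rpower_weight_pos c x t : 0 < Rpower t c * weight x t.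
Proof. apply Rmult_lt_0_compat; apply exp_pos. Qed.

Lemma continuous_Rpower_weight c x t : 0 < t -> continuous (fun s => Rpower s c * weight x s) t.
Proof.
  intros Ht. apply (continuous_mult (fun s => Rpower s c) (weight x));
    [apply continuous_Rpower_pos, Ht | apply continuous_weight].
Qed.

Lemma weight_le x t : weight x t <= exp (x ^ 2).
Proof. apply exp_le_compat. pose proof (pow2_ge_0 (t + x)). nra. Qed.

Lemma weight_mul_exp_le x b t : weight x t * exp (b * t) <= exp ((b - 2 * x) ^ 2 / 4).
Proof.
  unfold weight. rewrite <- exp_plus. apply exp_le_compat.
  pose proof (pow2_ge_0 (t - (b - 2 * x) / 2)). nra.
Qed.

Lemma ex_RInt_gen_moment c x : -1 < c ->
  ex_RInt_gen (fun t => Rpower t c * weight x t) at_0 at_oo.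
Proof.
  intros Hc. destruct (one_plus_Rpower_sq_le (c + 1)) as [C [HC HCb]]; [lra|].
  apply (ex_RInt_gen_Rpower_mul c (weight x) (2 * exp (x ^ 2) + 2 * C * exp ((1 - 2 * x) ^ 2 / 4)));
    auto using continuous_weight.
  intros t Ht. specialize (HCb t Ht).
  pose proof (weight_le x t) as Hw0.
  pose proof (weight_mul_exp_le x 1 t) as Hw1. rewrite Rmult_1_l in Hw1.
  assert (Hw : 0 < weight x t) by apply exp_pos.
  rewrite Rabs_right by lra.
  apply Rle_trans with (weight x t * (2 + 2 * C * exp t)); [apply Rmult_le_compat_l; lra | nra].
Qed.

Lemma is_RInt_gen_moment c x : -1 < c ->
  is_RInt_gen (fun t => Rpower t c * weight x t) at_0 at_oo (moment c x).
Proof.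
  intros Hc. apply (RInt_gen_correct (V := R_CompleteNormedModule)), ex_RInt_gen_moment, Hc.
Qed.

Lemma moment_pos c x : -1 < c -> 0 < moment c x.
Proof.
  intros Hc. apply (is_RInt_gen_0_oo_gt0 _ _ 1 (is_RInt_gen_moment c x Hc));
    auto using continuous_Rpower_weight, Rlt_le, Rpower_weight_pos, Rlt_0_1.
Qed.

Lemma Rpower_weight_at_0 c x : -1 < c ->
  filterlim (fun t => Rpower t (c + 1) * weight x t) at_0 (locally 0).
Proof.
  intros Hc.
  apply (filterlim_le_le (fun _ => 0) _ (fun t => exp (x ^ 2) * Rpower t (c + 1)) (Finite 0)).
  - apply (filter_imp (fun t => 0 < t)); [|apply at_0_pos]. intros t Ht. split.
    + apply Rlt_le, Rpower_weight_pos.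
    + rewrite Rmult_comm. apply Rmult_le_compat_r; [apply Rlt_le, exp_pos | apply weight_le].
  - apply filterlim_const.
  - replace (Finite 0) with (Finite (exp (x ^ 2) * 0)) by (f_equal; ring).
    apply filterlim_const_mult, Rpower_at_0. lra.
Qed.

Lemma Rpower_weight_at_oo c x : -1 < c ->
  filterlim (fun t => Rpower t (c + 1) * weight x t) at_oo (locally 0).
Proof.
  intros Hc. set (C := exp ((c + 1) * ln (c + 1) - (c + 1))). set (B := exp ((2 - 2 * x) ^ 2 / 4)).
  apply (filterlim_le_le (fun _ => 0) _ (fun t => C * B * exp (- t)) (Finite 0)).
  - apply (filter_imp (fun t => 0 < t)); [|apply at_oo_pos]. intros t Ht.
    split; [apply Rlt_le, Rpower_weight_pos|].
    pose proof (Rpower_le_exp (c + 1) t ltac:(lra) Ht) as Hpow. fold C in Hpow.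
    assert (Hw : exp t * weight x t <= B * exp (- t)).
    { replace (exp t * weight x t) with (weight x t * exp (2 * t) * exp (- t))
        by (rewrite Rmult_assoc, <- exp_plus; replace (2 * t + - t) with t by ring; ring).
      apply Rmult_le_compat_r; [apply Rlt_le, exp_pos | apply weight_mul_exp_le]. }
    apply Rle_trans with (C * exp t * weight x t).
    + apply Rmult_le_compat_r; [apply Rlt_le, exp_pos | exact Hpow].
    + rewrite !Rmult_assoc. apply Rmult_le_compat_l; [apply Rlt_le, exp_pos | exact Hw].
  - apply filterlim_const.
  - replace (Finite 0) with (Finite (C * B * 0)) by (f_equal; ring).
    apply filterlim_const_mult, exp_opp_at_oo.
Qed.

Lemma is_derive_Rpower_weight c x t : 0 < t ->
  is_derive (fun s => Rpower s (c + 1) * weight x s) t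
    ((c + 1) * (Rpower t c * weight x t) - 2 * (Rpower t (c + 2) * weight x t)
     - 2 * x * (Rpower t (c + 1) * weight x t)).
Proof.
  intros Ht. rewrite Rpower_plus_1, Rpower_plus_2 by exact Ht.
  unfold Rpower, weight. auto_derive; [exact Ht|].
  replace ((c + 1) * ln t) with (c * ln t + ln t) by ring.
  replace (- (t * (t * 1)) + - (2 * x * t)) with (- t ^ 2 - 2 * x * t) by ring.
  rewrite exp_plus, exp_ln by exact Ht. field. lra.
Qed.

Lemma moment_recurrence c x : -1 < c ->
  (c + 1) * moment c x = 2 * moment (c + 2) x + 2 * x * moment (c + 1) x.
Proof.
  intros Hc. assert (Hc1 : -1 < c + 1) by lra. assert (Hc2 : -1 < c + 2) by lra.
  set (dF := fun t => (c + 1) * (Rpower t c * weight x t) - 2 * (Rpower t (c + 2) * weight x t)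
                      - 2 * x * (Rpower t (c + 1) * weight x t)).
  assert (Hcomb : is_RInt_gen dF at_0 at_oo
            ((c + 1) * moment c x - 2 * moment (c + 2) x - 2 * x * moment (c + 1) x)).
  { exact (is_RInt_gen_minus _ _ _ _
             (is_RInt_gen_minus _ _ _ _
                (is_RInt_gen_scal _ (c + 1) _ (is_RInt_gen_moment c x Hc))
                (is_RInt_gen_scal _ 2 _ (is_RInt_gen_moment (c + 2) x Hc2)))
             (is_RInt_gen_scal _ (2 * x) _ (is_RInt_gen_moment (c + 1) x Hc1))). }
  assert (Hzero : is_RInt_gen dF at_0 at_oo (0 - 0)).
  { apply (is_RInt_gen_0_oo_derive dF (fun t => Rpower t (c + 1) * weight x t)).
    - intros t Ht. apply is_derive_Rpower_weight, Ht.
    - intros t Ht. apply (ex_derive_continuous dF). unfold dF, Rpower, weight. auto_derive.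
      repeat split; exact Ht.
    - apply Rpower_weight_at_0, Hc.
    - apply Rpower_weight_at_oo, Hc. }
  apply (is_RInt_gen_unique (V := R_CompleteNormedModule)) in Hcomb, Hzero.
  rewrite Hzero in Hcomb. lra.
Qed.

Lemma is_derive_quadratic_remainder (f : R -> R) x l B :
  (forall h, Rabs h <= 1 -> Rabs (f (x + h) - f x - h * l) <= B * h ^ 2) -> is_derive f x l.
Proof.
  intros Hrem. apply is_derive_Reals. intros eps Heps.
  pose proof (Rabs_pos B) as HB.
  set (d := Rmin 1 (eps / (Rabs B + 1))).
  assert (Hd : 0 < d) by (apply Rmin_glb_lt; [lra | apply Rdiv_lt_0_compat; lra]).
  exists (mkposreal d Hd). intros h Hh0 Hh. simpl in Hh.
  pose proof (Rmin_l 1 (eps / (Rabs B + 1))) as Hd1.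
  pose proof (Rmin_r 1 (eps / (Rabs B + 1))) as Hd2.
  fold d in Hd1, Hd2.
  specialize (Hrem h ltac:(lra)). rewrite <- pow2_abs in Hrem.
  assert (Hah : 0 < Rabs h) by (apply Rabs_pos_lt, Hh0).
  assert (Hsmall : (Rabs B + 1) * Rabs h < eps).
  { assert (Hh' : Rabs h < eps / (Rabs B + 1)) by lra.
    apply (Rmult_lt_compat_l (Rabs B + 1)) in Hh'; [|lra].
    replace ((Rabs B + 1) * (eps / (Rabs B + 1))) with eps in Hh' by (field; lra). exact Hh'. }
  replace ((f (x + h) - f x) / h - l) with ((f (x + h) - f x - h * l) / h) by (field; exact Hh0).
  unfold Rdiv. rewrite Rabs_mult, Rabs_inv.
  apply (Rmult_lt_reg_r (Rabs h)); [exact Hah|]. rewrite Rmult_assoc, Rinv_l, Rmult_1_r by lra.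
  pose proof (Rle_abs B). nra.
Qed.

Lemma weight_remainder_bounds x h t : Rabs h <= 1 -> 0 < t ->
  0 <= weight (x + h) t - weight x t + 2 * h * t * weight x t
    <= 4 * h ^ 2 * t ^ 2 * weight (x - 1) t.
Proof.
  intros Hh Ht. apply Rabs_le_between in Hh.
  assert (Eh : weight (x + h) t = weight x t * exp (- 2 * h * t))
    by (unfold weight; rewrite <- exp_plus; f_equal; ring).
  assert (E1 : weight (x - 1) t = weight x t * exp (2 * t))
    by (unfold weight; rewrite <- exp_plus; f_equal; ring).
  rewrite Eh, E1.
  destruct (exp_remainder_bounds (- 2 * h * t)) as [Tlo Thi].
  assert (Hmax : Rmax 1 (exp (- 2 * h * t)) <= exp (2 * t)).
  { apply Rmax_lub; [pose proof (exp_ineq1_le (2 * t)); lra | apply exp_le_compat; nra]. }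
  assert (Hw : 0 < weight x t) by apply exp_pos.
  replace (weight x t * exp (- 2 * h * t) - weight x t + 2 * h * t * weight x t)
    with (weight x t * (exp (- 2 * h * t) - 1 - - 2 * h * t)) by ring.
  replace (4 * h ^ 2 * t ^ 2 * (weight x t * exp (2 * t)))
    with (weight x t * ((- 2 * h * t) ^ 2 * exp (2 * t))) by ring.
  split; [apply Rmult_le_pos | apply Rmult_le_compat_l]; try lra.
  eapply Rle_trans; [exact Thi|]. apply Rmult_le_compat_l; [apply pow2_ge_0 | exact Hmax].
Qed.

Lemma moment_remainder_bounds c x h : -1 < c -> Rabs h <= 1 ->
  0 <= moment c (x + h) - moment c x + 2 * h * moment (c + 1) x
    <= 4 * h ^ 2 * moment (c + 2) (x - 1).
Proof.
  intros Hc Hh. assert (Hc1 : -1 < c + 1) by lra. assert (Hc2 : -1 < c + 2) by lra.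
  set (r := fun t => Rpower t c * weight (x + h) t - Rpower t c * weight x t
                     + 2 * h * (Rpower t (c + 1) * weight x t)).
  assert (Hr : is_RInt_gen r at_0 at_oo
                 (moment c (x + h) - moment c x + 2 * h * moment (c + 1) x)).
  { exact (is_RInt_gen_plus _ _ _ _
             (is_RInt_gen_minus _ _ _ _
                (is_RInt_gen_moment c (x + h) Hc) (is_RInt_gen_moment c x Hc))
             (is_RInt_gen_scal _ (2 * h) _ (is_RInt_gen_moment (c + 1) x Hc1))). }
  pose proof (is_RInt_gen_scal _ (4 * h ^ 2) _ (is_RInt_gen_moment (c + 2) (x - 1) Hc2)) as Hbound.
  assert (Hpt : forall t, 0 < t ->
            0 <= r t <= 4 * h ^ 2 * (Rpower t (c + 2) * weight (x - 1) t)).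
  { intros t Ht. unfold r. rewrite Rpower_plus_1, Rpower_plus_2 by exact Ht.
    destruct (weight_remainder_bounds x h t Hh Ht) as [Lo Hi].
    assert (Hct : 0 < Rpower t c) by apply exp_pos.
    split; nra. }
  split.
  - apply (is_RInt_gen_0_oo_ge0 r _ Hr). intros t Ht. apply Hpt, Ht.
  - apply (is_RInt_gen_0_oo_le r _ _ _ Hr Hbound). intros t Ht. apply Hpt, Ht.
Qed.

Lemma is_derive_moment c x : -1 < c -> is_derive (moment c) x (- 2 * moment (c + 1) x).
Proof.
  intros Hc. apply (is_derive_quadratic_remainder _ _ _ (4 * moment (c + 2) (x - 1))).
  intros h Hh. destruct (moment_remainder_bounds c x h Hc Hh) as [Lo Hi].
  rewrite Rabs_right by lra. lra.
Qed.

Lemma quadratic_nonzero_at_pos c0 c1 c2 : (c0 <> 0 \/ c1 <> 0 \/ c2 <> 0) ->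
  exists t, 0 < t /\ c0 + c1 * t + c2 * t ^ 2 <> 0.
Proof.
  intros Hnz.
  destruct (Req_dec (c0 + c1 * 1 + c2 * 1 ^ 2) 0); [|exists 1; split; [lra | auto]].
  destruct (Req_dec (c0 + c1 * 2 + c2 * 2 ^ 2) 0); [|exists 2; split; [lra | auto]].
  destruct (Req_dec (c0 + c1 * 3 + c2 * 3 ^ 2) 0); [|exists 3; split; [lra | auto]].
  exfalso. assert (c2 = 0) by nra. assert (c1 = 0) by nra. assert (c0 = 0) by nra. tauto.
Qed.

Lemma moment_quadratic_form_pos c x c0 c1 c2 : -1 < c -> (c0 <> 0 \/ c1 <> 0 \/ c2 <> 0) ->
  0 < c0 ^ 2 * moment c x + 2 * c0 * c1 * moment (c + 1) x
      + (c1 ^ 2 + 2 * c0 * c2) * moment (c + 2) x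
      + 2 * c1 * c2 * moment (c + 3) x + c2 ^ 2 * moment (c + 4) x.
Proof.
  intros Hc Hnz.
  assert (Hc1 : -1 < c + 1) by lra. assert (Hc2 : -1 < c + 2) by lra.
  assert (Hc3 : -1 < c + 3) by lra. assert (Hc4 : -1 < c + 4) by lra.
  set (q := fun t => c0 + c1 * t + c2 * t ^ 2).
  set (g := fun t => Rpower t c * weight x t * q t ^ 2).
  assert (Hg : is_RInt_gen g at_0 at_oo
     (c0 ^ 2 * moment c x + 2 * c0 * c1 * moment (c + 1) x
      + (c1 ^ 2 + 2 * c0 * c2) * moment (c + 2) x
      + 2 * c1 * c2 * moment (c + 3) x + c2 ^ 2 * moment (c + 4) x)).
  { eapply is_RInt_gen_ext; [|exact (is_RInt_gen_plus _ _ _ _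
       (is_RInt_gen_plus _ _ _ _
         (is_RInt_gen_plus _ _ _ _
           (is_RInt_gen_plus _ _ _ _
             (is_RInt_gen_scal _ (c0 ^ 2) _ (is_RInt_gen_moment c x Hc))
             (is_RInt_gen_scal _ (2 * c0 * c1) _ (is_RInt_gen_moment (c + 1) x Hc1)))
           (is_RInt_gen_scal _ (c1 ^ 2 + 2 * c0 * c2) _ (is_RInt_gen_moment (c + 2) x Hc2)))
         (is_RInt_gen_scal _ (2 * c1 * c2) _ (is_RInt_gen_moment (c + 3) x Hc3)))
       (is_RInt_gen_scal _ (c2 ^ 2) _ (is_RInt_gen_moment (c + 4) x Hc4)))].
    apply (filter_prod_0_oo _ 1 0); [lra|]. intros a b Ha Hb t Ht. simpl in Ht.
    assert (Ht0 : 0 < t) by (pose proof (Rmin_glb_lt a b 0 ltac:(lra) ltac:(lra)); lra).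
    replace (c + 3) with (c + 1 + 2) by ring. replace (c + 4) with (c + 2 + 2) by ring.
    unfold g, q, plus, scal; simpl; unfold mult; simpl.
    rewrite !Rpower_plus_2, !Rpower_plus_1 by exact Ht0. ring. }
  destruct (quadratic_nonzero_at_pos c0 c1 c2 Hnz) as (t0 & Ht0 & Hq0).
  apply (is_RInt_gen_0_oo_gt0 g _ t0 Hg).
  - intros t Ht. apply (continuous_mult (fun s => Rpower s c * weight x s) (fun s => q s ^ 2));
      [apply continuous_Rpower_weight, Ht|].
    apply (ex_derive_continuous (fun s => q s ^ 2)). unfold q. auto_derive. exact I.
  - intros t Ht. apply Rmult_le_pos; [apply Rlt_le, Rpower_weight_pos | apply pow2_ge_0].
  - exact Ht0.
  - apply Rmult_lt_0_compat; [apply Rpower_weight_pos|]. apply pow2_gt_0, Hq0.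
Qed.

Lemma moment_cauchy_schwarz c x : -1 < c -> moment (c + 1) x ^ 2 < moment c x * moment (c + 2) x.
Proof.
  intros Hc. pose proof (moment_pos c x Hc) as H0.
  pose proof (moment_quadratic_form_pos c x (moment (c + 1) x) (- moment c x) 0 Hc
                ltac:(right; left; lra)) as HQ.
  nra.
Qed.

Lemma quadratic_form_identity a x J0 J1 J2 J3 J4 : J0 <> 0 ->
  a * J0 = 2 * J2 + 2 * x * J1 ->
  (a + 1) * J1 = 2 * J3 + 2 * x * J2 ->
  (a + 2) * J2 = 2 * J4 + 2 * x * J3 ->
  let A := J0 * J2 - J1 ^ 2 in
  let c0 := a * A - J1 ^ 2 in
  let c1 := J0 * J1 - 2 * x * A in
  let c2 := - 2 * A in
  c0 ^ 2 * J0 + 2 * c0 * c1 * J1 + (c1 ^ 2 + 2 * c0 * c2) * J2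
    + 2 * c1 * c2 * J3 + c2 ^ 2 * J4
  = 2 * A * (2 * J0 * J2 ^ 2 - J1 ^ 2 * J2 - J0 * J1 * J3).
Proof.
  intros HJ0 R0 R1 R2 A c0 c1 c2.
  assert (E4 : J4 = ((a + 2) * J2 - 2 * x * J3) / 2) by lra.
  assert (E3 : J3 = ((a + 1) * J1 - 2 * x * J2) / 2) by lra.
  assert (Ea : a = (2 * J2 + 2 * x * J1) / J0) by (field_simplify_eq; lra).
  unfold c0, c1, c2, A. rewrite E4, E3, Ea. field. exact HJ0.
Qed.

Definition moment_delta c x :=
  2 * moment c x * moment (c + 2) x ^ 2 - moment (c + 1) x ^ 2 * moment (c + 2) x
  - moment c x * moment (c + 1) x * moment (c + 3) x.

Lemma moment_delta_pos c x : -1 < c -> 0 < moment_delta c x.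
Proof.
  intros Hc.
  pose proof (moment_recurrence c x Hc) as R0.
  assert (R1 : (c + 1 + 1) * moment (c + 1) x = 2 * moment (c + 3) x + 2 * x * moment (c + 2) x).
  { replace (c + 3) with (c + 1 + 2) by ring. replace (c + 2) with (c + 1 + 1) by ring.
    apply moment_recurrence. lra. }
  assert (R2 : (c + 1 + 2) * moment (c + 2) x = 2 * moment (c + 4) x + 2 * x * moment (c + 3) x).
  { replace (c + 1 + 2) with (c + 2 + 1) by ring. replace (c + 3) with (c + 2 + 1) by ring.
    replace (c + 4) with (c + 2 + 2) by ring. apply moment_recurrence. lra. }
  pose proof (moment_cauchy_schwarz c x Hc) as HA.
  pose proof (moment_pos c x Hc) as H0.
  pose proof (quadratic_form_identity (c + 1) x _ _ _ _ _ (Rgt_not_eq _ _ H0) R0 R1 R2) as Hid.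
  cbv zeta in Hid.
  set (A := moment c x * moment (c + 2) x - moment (c + 1) x ^ 2) in Hid.
  pose proof (moment_quadratic_form_pos c x ((c + 1) * A - moment (c + 1) x ^ 2)
     (moment c x * moment (c + 1) x - 2 * x * A) (- 2 * A) Hc
     ltac:(right; right; unfold A; lra)) as HQ.
  rewrite Hid in HQ. unfold moment_delta. unfold A in HQ. nra.
Qed.

Definition moment_ratio c x := moment (c + 1) x ^ 2 / (moment c x * moment (c + 2) x).

Lemma is_derive_moment_ratio c x : -1 < c ->
  is_derive (moment_ratio c) x
    (- (2 * moment (c + 1) x * moment_delta c x) / (moment c x * moment (c + 2) x) ^ 2).
Proof.
  intros Hc.
  pose proof (is_derive_moment c x Hc) as D0.
  pose proof (is_derive_moment (c + 1) x ltac:(lra)) as D1.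
  pose proof (is_derive_moment (c + 2) x ltac:(lra)) as D2.
  replace (c + 1 + 1) with (c + 2) in D1 by ring. replace (c + 2 + 1) with (c + 3) in D2 by ring.
  pose proof (moment_pos c x Hc) as P0. pose proof (moment_pos (c + 2) x ltac:(lra)) as P2.
  pose proof (is_derive_div (fun t => moment (c + 1) t ^ 2)
                (fun t => moment c t * moment (c + 2) t) x _ _
                (is_derive_pow _ 2 x _ D1) (is_derive_mult _ _ x _ _ D0 D2 Rmult_comm)
                (Rgt_not_eq _ _ (Rmult_lt_0_compat _ _ P0 P2))) as Hdiv.
  match type of Hdiv with is_derive _ _ ?l => replace (- _ / _) with l end; [exact Hdiv|].
  unfold moment_delta, plus, mult; simpl. field. nra.
Qed.

Lemma moment_ratio_decreasing c x y : -1 < c -> x < y -> moment_ratio c y < moment_ratio c x.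
Proof.
  intros Hc Hxy. apply Ropp_lt_cancel.
  apply (incr_function (fun z => - moment_ratio c z) m_infty p_infty
           (fun z => - (- (2 * moment (c + 1) z * moment_delta c z)
                        / (moment c z * moment (c + 2) z) ^ 2)));
    try exact I; [| |exact Hxy]; intros z _ _.
  - apply (is_derive_opp (moment_ratio c)), is_derive_moment_ratio, Hc.
  - pose proof (moment_pos c z Hc). pose proof (moment_pos (c + 1) z ltac:(lra)).
    pose proof (moment_pos (c + 2) z ltac:(lra)). pose proof (moment_delta_pos c z Hc).
    rewrite Ropp_div, Ropp_involutive. apply Rdiv_lt_0_compat; [nra | apply pow_lt; nra].
Qed.

Lemma Rnu_moment_ratio nu z : nu < 0 ->
  Rnu nu z = Gamma_fn (- nu) * Gamma_fn (- (nu - 2)) / Gamma_fn (- (nu - 1)) ^ 2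
             * moment_ratio (- nu - 1) z.
Proof.
  intros Hnu. unfold Rnu, moment_ratio. rewrite !Hermite_moment.
  replace (- (nu - 1) - 1) with (- nu - 1 + 1) by ring.
  replace (- (nu - 2) - 1) with (- nu - 1 + 2) by ring.
  pose proof (moment_pos (- nu - 1) z ltac:(lra)).
  pose proof (moment_pos (- nu - 1 + 2) z ltac:(lra)).
  pose proof (Gamma_fn_pos (- nu) ltac:(lra)). pose proof (Gamma_fn_pos (- (nu - 1)) ltac:(lra)).
  pose proof (Gamma_fn_pos (- (nu - 2)) ltac:(lra)).
  field. repeat split; lra.
Qed.

Theorem theorem3p1 (nu : R) (hnu : nu < 0) :
  forall x y : R, x < y -> Rnu nu y < Rnu nu x.
Proof.
  intros x y Hxy. rewrite !(Rnu_moment_ratio nu _ hnu).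
  apply Rmult_lt_compat_l.
  - apply Rdiv_lt_0_compat; [apply Rmult_lt_0_compat | apply pow_lt]; apply Gamma_fn_pos; lra.
  - apply moment_ratio_decreasing; [lra | exact Hxy].
Qed.
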